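(* Let $\mathcal{M}=\langle S,\to,L\rangle$ be a labeled transition system and let $B\subseteq S\times S$ be a skipping simulation (SKS) on $\mathcal{M}$. Then $B$ is a reduced well-founded skipping relation (RWFSK) on $\mathcal{M}$.
   Context: A labeled transition system is $\mathcal{M}=\langle S,\to,L\rangle$ where $S$ is a non-empty (possibly infinite, of arbitrary cardinality) set of states, $\to\subseteq S\times S$ is left-total (every state has a successor), and $L$ is a function with domain $S$. A fullpath is an infinite sequence $\sigma$ of states with $\sigma(i)\to\sigma(i+1)$ for all $i\in\omega$; ''$\sigma$ is a fullpath starting at $s$'' means additionally $\sigma(0)=s$. $w\to^{+}v$ means there is a finite path $w=v_0\to\cdots\to v_k=v$ with $k\ge1$. Matching: let $\mathit{INC}$ be the set of strictly increasing infinite sequences of natural numbers starting at $0$. For a fullpath $\sigma$ and $\pi\in\mathit{INC}$, the $i$-th segment of $\sigma$ w.r.t. $\pi$ is the finite sequence $\sigma(\pi(i)),\dots,\sigma(\pi(i+1)-1)$. For a relation $B$, fullpaths $\sigma,\delta$ and $\pi,\xi\in\mathit{INC}$, $\mathit{corr}(B,\sigma,\pi,\delta,\xi)$ holds iff for every $i\in\omega$ and every state $s$ in the $i$-th segment of $\sigma$ w.r.t. $\pi$, $sB\delta(\xi(i))$. $\mathit{match}(B,\sigma,\delta)$ holds iff there exist $\pi,\xi\in\mathit{INC}$ with $\mathit{corr}(B,\sigma,\pi,\delta,\xi)$. $B\subseteq S\times S$ is a skipping simulation (SKS) on $\mathcal{M}$ iff for all $s,w$ with $sBw$: (SKS1)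 $L(s)=L(w)$, and (SKS2) for every fullpath $\sigma$ starting at $s$ there is a fullpath $\delta$ starting at $w$ with $\mathit{match}(B,\sigma,\delta)$. $B$ is an RWFSK on $\mathcal{M}$ iff (RWFSK1) for all $s,w$ with $sBw$, $L(s)=L(w)$; and (RWFSK2) there exist a well-founded set $\langle W,\prec\rangle$ and a function $\mathit{rankt}:S\times S\to W$ such that for all $s,u,w\in S$ with $s\to u$ and $sBw$, either (a) $uBw$ and $\mathit{rankt}(u,w)\prec\mathit{rankt}(s,w)$, or (b) there is $v$ with $w\to^{+}v$ and $uBv$. *)

From Stdlib Require Import Arith Relations Wellfounded.

Set Implicit Arguments.

Record LTS := mkLTS {
  St : Type;
  Lab : Type;
  trans : St -> St -> Prop;
  lab : St -> Lab;
  St_nonempty : inhabited St;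
  trans_left_total : forall s : St, exists u : St, trans s u
}.

Section LTSDefs.
Variable M : LTS.

Definition fullpath (sigma : nat -> St M) : Prop :=
  forall i : nat, trans M (sigma i) (sigma (S i)).

Definition fullpath_from (s : St M) (sigma : nat -> St M) : Prop :=
  fullpath sigma /\ sigma 0 = s.

Definition trans_plus (w v : St M) : Prop := clos_trans _ (trans M) w v.

Definition INC (pi : nat -> nat) : Prop :=
  pi 0 = 0 /\ forall i : nat, pi i < pi (S i).

Definition corr (B : St M -> St M -> Prop) (sigma : nat -> St M) (pi : nat -> nat)
    (delta : nat -> St M) (xi : nat -> nat) : Prop :=
  forall i k : nat, pi i <= k < pi (S i) -> B (sigma k) (delta (xi i)).

Definition match_ (B : St M -> St M -> Prop) (sigma delta : nat -> St M) : Prop :=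
  exists pi xi : nat -> nat, INC pi /\ INC xi /\ corr B sigma pi delta xi.

Definition SKS (B : St M -> St M -> Prop) : Prop :=
  forall s w : St M, B s w ->
    lab M s = lab M w /\
    (forall sigma, fullpath_from s sigma ->
       exists delta, fullpath_from w delta /\ match_ B sigma delta).

Definition RWFSK (B : St M -> St M -> Prop) : Prop :=
  (forall s w : St M, B s w -> lab M s = lab M w) /\
  exists (W : Type) (prec : W -> W -> Prop) (rankt : St M -> St M -> W),
    well_founded prec /\
    forall s u w : St M, trans M s u -> B s w ->
      (B u w /\ prec (rankt u w) (rankt s w)) \/
      (exists v : St M, trans_plus w v /\ B u v).

End LTSDefs.
Arguments SKS : clear implicits.
Arguments RWFSK : clear implicits.

(* If s -> u and B s w, extend s u to a fullpath and match it from w.  Either the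
   second segment of the matching starts at u, and then u is related to a strict
   successor of w, or u lies in the first segment and is related to w itself.  A
   stuttering step of the second kind cannot be repeated forever: an infinite
   chain of them is a fullpath whose own matching eventually relates one of its
   states to a strict successor of w, which a stuttering step excludes. *)
From Stdlib Require Import Arith Relations Wellfounded.
From Stdlib Require Import Classical ClassicalEpsilon Lia.
Set Implicit Arguments.

Lemma wf_of_no_descending_chain (A : Type) (R : A -> A -> Prop) :
  (forall f : nat -> A, ~ (forall n, R (f (S n)) (f n))) -> well_founded R.
Proof.
  intros no_chain x; apply NNPP; intros not_acc_x.
  assert (step : forall y : {y | ~ Acc R y}, exists z : {z | ~ Acc R z},
                   R (proj1_sig z) (proj1_sig y)).
  { intros [y not_acc_y]; apply NNPP; intros no_pred; apply not_acc_y.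
    constructor; intros z Rzy; apply NNPP; intros not_acc_z.
    apply no_pred; exists (exist _ z not_acc_z); exact Rzy. }
  destruct (choice _ step) as [next Hnext].
  apply (no_chain (fun n => proj1_sig (Nat.iter n next (exist _ x not_acc_x)))).
  intros n; apply Hnext.
Qed.

Section Paths.
Context {M : LTS}.

Lemma fullpath_trans_plus (d : nat -> St M) :
  fullpath M d -> forall n, trans_plus M (d 0) (d (S n)).
Proof.
  intros Hd n; induction n as [|n IH].
  - apply t_step, Hd.
  - eapply t_trans; [exact IH | apply t_step, Hd].
Qed.

Lemma fullpath_through {s u : St M} :
  trans M s u -> exists sigma, fullpath_from M s sigma /\ sigma 1 = u.
Proof.
  intros Hsu.
  destruct (choice _ (@trans_left_total M)) as [next Hnext].
  exists (fun n => match n with 0 => s | S m => Nat.iter m next u end).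
  repeat split; intros [|n]; [exact Hsu | apply Hnext].
Qed.

End Paths.

Section SkippingSimulation.
Variable M : LTS.
Variable B : St M -> St M -> Prop.
Hypothesis HB : SKS M B.

(* k is the start pi(1) of the second segment of a matching; v is the state
   delta(xi(1)) it is matched to. *)
Lemma SKS_first_block (s w : St M) (sigma : nat -> St M) :
  B s w -> fullpath_from M s sigma ->
  exists k, 0 < k /\ (forall j, j < k -> B (sigma j) w) /\
            exists v, trans_plus M w v /\ B (sigma k) v.
Proof.
  intros Hsw Hsigma.
  destruct (proj2 (HB Hsw) sigma Hsigma)
    as [delta [[Hdelta delta0] [pi [xi [[pi0 pi_inc] [[xi0 xi_inc] Hcorr]]]]]].
  exists (pi 1); repeat split.
  - specialize (pi_inc 0); lia.
  - intros j Hj; rewrite <- delta0, <- xi0; apply Hcorr; lia.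
  - exists (delta (xi 1)); split.
    + replace (xi 1) with (S (xi 1 - 1)) by (specialize (xi_inc 0); lia).
      rewrite <- delta0; apply fullpath_trans_plus, Hdelta.
    + apply Hcorr; specialize (pi_inc 1); lia.
Qed.

Lemma SKS_step {s u w : St M} :
  trans M s u -> B s w -> B u w \/ exists v, trans_plus M w v /\ B u v.
Proof.
  intros Hsu Hsw.
  destruct (fullpath_through Hsu) as [sigma [Hsigma sigma1]].
  destruct (SKS_first_block Hsw Hsigma) as [[|[|k]] [Hk [Hblock Hnext]]].
  - lia.
  - right; rewrite <- sigma1; exact Hnext.
  - left; rewrite <- sigma1; apply Hblock; lia.
Qed.

(* The rank order: rankt is the identity on pairs, ordered by the stuttering
   steps of case (a). *)
Definition stutter (p q : St M * St M) : Prop :=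
  let (u, w) := p in let (s, w') := q in
  w = w' /\ trans M s u /\ B s w /\ B u w /\
  ~ (exists v, trans_plus M w v /\ B u v).

Lemma stutter_wf : well_founded stutter.
Proof.
  apply wf_of_no_descending_chain; intros f Hf.
  set (w := snd (f 0)).
  assert (Hsnd : forall n, snd (f n) = w).
  { induction n as [|n IH]; [reflexivity|].
    specialize (Hf n); destruct (f (S n)), (f n); simpl in *; destruct Hf as [-> _]; exact IH. }
  assert (Hstep : forall n, trans M (fst (f n)) (fst (f (S n))) /\
                            B (fst (f n)) w /\
                            ~ (exists v, trans_plus M w v /\ B (fst (f (S n))) v)).
  { intros n; specialize (Hf n); pose proof (Hsnd n) as En.
    destruct (f (S n)), (f n); simpl in *; subst.
    destruct Hf as [-> [? [? [? ?]]]]; tauto. }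
  destruct (@SKS_first_block (fst (f 0)) w (fun n => fst (f n)))
    as [[|k] [Hk [_ Hprogress]]].
  - apply Hstep.
  - split; [intros n; apply Hstep | reflexivity].
  - lia.
  - exact (proj2 (proj2 (Hstep k)) Hprogress).
Qed.

End SkippingSimulation.

Theorem theorem3 (M : LTS) (B : St M -> St M -> Prop) :
  SKS M B -> RWFSK M B.
Proof.
  intros HB; split.
  - intros s w Hsw; exact (proj1 (HB s w Hsw)).
  - exists (St M * St M)%type, (stutter M B), pair.
    split; [apply stutter_wf, HB|].
    intros s u w Hsu Hsw.
    destruct (classic (exists v, trans_plus M w v /\ B u v)) as [Hv | Hv].
    + right; exact Hv.
    + left; destruct (SKS_step HB Hsu Hsw) as [Huw | Hv']; [|contradiction].
      split; [exact Huw | repeat split; assumption].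
Qed.
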